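(* Let $K$ be a field, let $\Lambda$ be the Grassmann algebra over $K$ on odd generators $x_0,x_1,x_2,\dots$, identify $x_i$ with the odd operator of left multiplication by $x_i$ on $\Lambda$, and let $\partial_i$ be the odd superderivation of $\Lambda$ with $\partial_i(x_j)=\delta_{ij}$. For $i\ge 0$ let $$v_i=\sum_{k\ge 0}\Big(\prod_{n=0}^{k-1}x_{i+3n}x_{i+3n+1}\Big)\partial_{i+3k}=\partial_i+x_ix_{i+1}\big(\partial_{i+3}+x_{i+3}x_{i+4}(\partial_{i+6}+\cdots)\big).$$ Then, for all $i,k\ge 0$, with $[a,b]=ab-(-1)^{|a||b|}ba$ the supercommutator in $\operatorname{End}\Lambda$, $$[v_i,v_{i+3k}]=2\Big(\prod_{n=0}^{k-1}x_{i+3n}x_{i+3n+1}\Big)x_{i+3k+1}v_{i+3k+3},$$ $$[v_i,v_{i+3k+1}]=-\Big(\prod_{n=0}^{k-1}x_{i+3n}x_{i+3n+1}\Big)x_{i+3k}v_{i+3k+3},$$ $$[v_i,v_{i+3k+2}]=-\Big(\prod_{n=0}^{k}x_{i+3n}x_{i+3n+1}\Big)x_{i+3k+2}v_{i+3k+5}.$$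
   Context: The $v_i$ are odd superderivations of $\Lambda$ given by formal infinite sums; applied to any element of $\Lambda$ only finitely many terms act nontrivially, so they are well-defined elements of $\operatorname{End}\Lambda$. All products of operators are compositions in $\operatorname{End}\Lambda$; $x_i,\partial_i$ are odd, with $\partial_ix_j+x_j\partial_i=\delta_{ij}$, $x_i^2=\partial_i^2=0$, and other pairs anticommuting. *)

From HB Require Import structures.
From mathcomp Require Import all_boot all_order all_algebra.
From mathcomp Require Import finmap.
Unset Strict Implicit. Unset Printing Implicit Defensive.
Import Order.TTheory GRing.Theory Num.Theory.
Local Open Scope fset_scope.
Local Open Scope ring_scope.

(* An element is given by its coefficients on the monomial basis
   x_S = x_{s_1} x_{s_2} ... x_{s_m}  (s_1 < s_2 < ... < s_m),  S : {fset nat}. *)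
Definition coeffs (K : fieldType) := {fset nat} -> K.

Definition grassmann (K : fieldType) (f : coeffs K) : Prop :=
  exists A : {fset {fset nat}}, forall S, S \notin A -> f S = 0.
Arguments grassmann {K} f.

(* operators on coefficient functions (restricted to Lambda they give End Lambda) *)
Definition op (K : fieldType) := coeffs K -> coeffs K.

(* number of elements of S smaller than i (sign of moving x_i into place) *)
Definition nbelow (S : {fset nat}) (i : nat) : nat := count (fun t => (t < i)%N) S.

(* left multiplication by x_i :  x_i x_S = (-1)^{#{s in S, s < i}} x_{S u {i}} if i \notin S, 0 else *)
Definition xop (K : fieldType) (i : nat) : op K := fun f T =>
  if i \in T then (-1) ^+ nbelow T i * f (T `\ i) else 0.

(* odd superderivation d_i with d_i(x_j) = delta_ij :
   d_i x_S = (-1)^{#{s in S, s < i}} x_{S \ {i}} if i \in S, 0 else *)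
Definition dop (K : fieldType) (i : nat) : op K := fun f T =>
  if i \notin T then (-1) ^+ nbelow T i * f (i |` T) else 0.

Fixpoint xprod (K : fieldType) (i k : nat) : op K :=
  match k with
  | 0 => id
  | k'.+1 => xprod K i k' \o (xop K (i + 3 * k') \o xop K (i + 3 * k').+1)
  end.

(* v_i = sum_{k>=0} (prod_{n<k} x_{i+3n} x_{i+3n+1}) d_{i+3k}.
   On the coefficient of x_T, the k-th term vanishes as soon as k >= max T + 2
   (it needs x_{i+3(k-1)} in T), so the formal sum is the finite sum below. *)
Definition vbound (T : {fset nat}) : nat := (\max_(t <- T) t).+2.

Definition vop (K : fieldType) (i : nat) : op K := fun f T =>
  \sum_(k < vbound T) (xprod K i k \o dop K (i + 3 * k)) f T.

(* supercommutator [a,b] = ab - (-1)^{|a||b|} ba, parities pa pb (true = odd) *)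
Definition scomm (K : fieldType) (pa pb : bool) (a b : op K) : op K := fun f T =>
  a (b f) T - (-1) ^+ (pa && pb) * b (a f) T.

(* On the coefficient of x_T only the first [vbound T] terms of the formal
   sum defining v_j are nonzero, so v_j agrees there with a finite truncation. This gives
   the recursion v_j = d_j + x_j x_{j+1} v_{j+3} and shows that v_j anticommutes with x_m
   and d_m for m < j. Hence for j > i + 1 the anticommutator [v_i, v_j] equals
   x_i x_{i+1} [v_{i+3}, v_j]; by induction on k this reduces the three identities to
   v_i^2 = x_{i+1} v_{i+3} and [v_i, v_{i+1}] = - x_i v_{i+3} (the third case for k = 0
   is the shift applied to [v_{i+2}, v_{i+3}]), which follow from the recursion and the
   canonical anticommutation relations of the x_a and d_a. *)

From HB Require Import structures.
From mathcomp Require Import all_boot all_order all_algebra.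
From mathcomp Require Import finmap.
From mathcomp Require Import boolp functions zify.
Import GRing.Theory.

Local Open Scope fset_scope.
Local Open Scope ring_scope.

Lemma nbelowD1 (T : {fset nat}) a b :
  a \in T -> nbelow T b = ((a < b) + nbelow (T `\ a) b)%N.
Proof.
move=> aT; rewrite /nbelow -!sum1_count !(big_mkcond (fun t => (t < b)%N)) /=.
by rewrite (big_fsetD1 a) //=; case: (a < b)%N.
Qed.
Arguments nbelowD1 [T a] b.

Lemma nbelowU1 (T : {fset nat}) a b :
  a \notin T -> nbelow (a |` T) b = ((a < b) + nbelow T b)%N.
Proof. by move=> aT; rewrite (nbelowD1 b (fset1U1 a T)) fsetU1K. Qed.
Arguments nbelowU1 [T a] b.

Lemma fsetU1D1 (T : {fset nat}) a b : a != b -> (a |` T) `\ b = a |` (T `\ b).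
Proof.
move=> ab; apply/fsetP => t; rewrite !(in_fsetD1, in_fset1U).
by case: (eqVneq t a) => [->|]; rewrite ?ab.
Qed.

Lemma leq_max_fset {T : {fset nat}} {t : nat} : t \in T -> (t <= \max_(s <- T) s)%N.
Proof. by move=> tT; rewrite (big_fsetD1 t) //= leq_maxl. Qed.

Lemma vbound_fsubset (T' T : {fset nat}) : T' `<=` T -> (vbound T' <= vbound T)%N.
Proof.
move=> sT'T; rewrite /vbound !ltnS; apply/bigmax_leqP_seq => t tT' _.
exact/leq_max_fset/(fsubsetP sT'T).
Qed.

Section Operators.
Variable K : fieldType.
Implicit Types (g h : coeffs K) (T : {fset nat}) (A B F G : op K).
Local Notation X := (xop K).
Local Notation D := (dop K).

Lemma xop_is_zmod_morphism a : zmod_morphism (X a).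
Proof.
move=> g h; apply/funext => T; rewrite /xop !addrfctE !opprfctE /=.
by case: ifP; rewrite ?mulrBr ?subr0.
Qed.
HB.instance Definition _ a :=
  GRing.isZmodMorphism.Build (coeffs K) (coeffs K) (X a) (xop_is_zmod_morphism a).

Lemma dop_is_zmod_morphism a : zmod_morphism (D a).
Proof.
move=> g h; apply/funext => T; rewrite /dop !addrfctE !opprfctE /=.
by case: ifP; rewrite ?mulrBr ?subr0.
Qed.
HB.instance Definition _ a :=
  GRing.isZmodMorphism.Build (coeffs K) (coeffs K) (D a) (dop_is_zmod_morphism a).

Lemma sign_sq n : (-1) ^+ n * (-1) ^+ n = 1 :> K.
Proof. by rewrite -exprMn mulrNN mulr1 expr1n. Qed.

Ltac sign_cases ab :=
  case: ltngtP ab => _ //= _;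
  rewrite ?expr0 ?expr1 ?mul1r ?mulN1r ?mulNr ?mulrN ?opprK //; by rewrite mulrCA.

Lemma xop2 a g : X a (X a g) = 0.
Proof. by apply/funext => T; rewrite /xop in_fsetD1 eqxx /=; case: ifP; rewrite ?mulr0. Qed.

Lemma dop2 a g : D a (D a g) = 0.
Proof. by apply/funext => T; rewrite /dop in_fset1U eqxx /=; case: ifP; rewrite ?mulr0. Qed.

Lemma xop_anticomm {a b : nat} g : a != b -> X a (X b g) = - X b (X a g).
Proof.
move=> ab; apply/funext => T; rewrite opprfctE /xop !in_fsetD1 eq_sym ab /=.
case aT: (a \in T); case bT: (b \in T); rewrite /= ?mulr0 ?oppr0 //.
rewrite !fsetDDl fsetUC (nbelowD1 a bT) (nbelowD1 b aT) !exprD.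
sign_cases ab.
Qed.

Lemma dop_anticomm {a b : nat} g : a != b -> D a (D b g) = - D b (D a g).
Proof.
move=> ab; apply/funext => T.
rewrite opprfctE /dop !in_fset1U (negbTE ab) eq_sym (negbTE ab) /=.
case aT: (a \in T); case bT: (b \in T); rewrite /= ?mulr0 ?oppr0 //.
rewrite !fsetUA (fsetUC [fset b]) (nbelowU1 b (negbT aT)) (nbelowU1 a (negbT bT)).
rewrite !exprD.
sign_cases ab.
Qed.

Lemma dop_xop_anticomm {a b : nat} g : a != b -> D a (X b g) = - X b (D a g).
Proof.
move=> ab; apply/funext => T.
rewrite opprfctE /xop /dop in_fset1U in_fsetD1 (negbTE ab) eq_sym (negbTE ab) /=.
case aT: (a \in T); case bT: (b \in T); rewrite /= ?mulr0 ?oppr0 //.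
rewrite fsetU1D1 // (nbelowU1 b (negbT aT)) (nbelowD1 a bT) !exprD.
sign_cases ab.
Qed.

Lemma xop_dop_anticomm {a b : nat} g : b != a -> X a (D b g) = - D b (X a g).
Proof. by move=> ba; rewrite dop_xop_anticomm ?opprK. Qed.

Lemma dop_xop_diag a g : D a (X a g) = g - X a (D a g).
Proof.
apply/eqP; rewrite eq_sym subr_eq; apply/eqP/funext => T.
rewrite addrfctE /xop /dop in_fset1U in_fsetD1 eqxx /=.
case aT: (a \in T); rewrite /= ?mulr0 ?add0r ?addr0.
  by rewrite (nbelowD1 a aT) ltnn /= fsetD1K // mulrA sign_sq mul1r.
by rewrite (nbelowU1 a (negbT aT)) ltnn /= fsetU1K ?aT // mulrA sign_sq mul1r.
Qed.

Local Notation Xp := (xprod K).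
Local Notation V := (vop K).

Lemma xprodS i k h : Xp i k.+1 h = X i (X i.+1 (Xp (i + 3) k h)).
Proof.
elim: k i h => [|k IH] i h; first by rewrite /= muln0 addn0.
by rewrite -[LHS]/(Xp i k.+1 _) IH mulnS addnA.
Qed.

Definition reads_subset (F : op K) :=
  forall T, exists c T', T' `<=` T /\ forall h, F h T = c * h T'.

Lemma reads_subset_xop a : reads_subset (X a).
Proof.
move=> T; rewrite /xop; case aT: (a \in T).
  by exists ((-1) ^+ nbelow T a), (T `\ a); split; [exact: fsubsetDl | move=> h].
by exists 0, T; split=> // h; rewrite mul0r.
Qed.

Lemma reads_subset_comp F G :
  reads_subset F -> reads_subset G -> reads_subset (F \o G).
Proof.
move=> rF rG T; have [c1 [T1 [sT1 F_T]]] := rF T; have [c2 [T2 [sT2 G_T1]]] := rG T1.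
exists (c1 * c2), T2; split; first exact: fsubset_trans sT2 sT1.
by move=> h; rewrite /= F_T G_T1 mulrA.
Qed.

Lemma reads_subset_xprod i k : reads_subset (Xp i k).
Proof.
elim: k => [|k IH] /=; first by move=> T; exists 1, T; split=> // h; rewrite mul1r.
by do 2!apply: reads_subset_comp => //; apply: reads_subset_xop.
Qed.

Lemma reads_subset_eq F g h T : reads_subset F ->
  (forall T', T' `<=` T -> g T' = h T') -> F g T = F h T.
Proof. by move=> rF gh; have [c [T' [sT' FT]]] := rF T; rewrite !FT gh. Qed.

(* [Xp j k.+1 h] vanishes at T unless [j + 3k] is in T, and [j + 3k >= k]. *)
Lemma xprod_eq0 j k h T : (vbound T <= k)%N -> Xp j k h T = 0.
Proof.
case: k => [|k] /= Tk; first by move: Tk; rewrite /vbound.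
have [c [T' [sT' ->]]] := reads_subset_xprod j k T.
rewrite /xop; case: ifP => [jT'|_]; last by rewrite mulr0.
by have := leq_max_fset (fsubsetP sT' _ jT'); move: Tk; rewrite /vbound; lia.
Qed.

Fixpoint vtrunc (n j : nat) : op K :=
  if n is n'.+1 then fun g => D j g + X j (X j.+1 (vtrunc n' (j + 3) g)) else D j.

Lemma vtruncS n j g : vtrunc n.+1 j g = D j g + X j (X j.+1 (vtrunc n (j + 3) g)).
Proof. by []. Qed.

Lemma vtruncE n j g : vtrunc n j g = \sum_(k < n.+1) Xp j k (D (j + 3 * k) g).
Proof.
elim: n j => [|n IH] j; first by rewrite big_ord1 /= muln0 addn0.
rewrite [LHS]/= IH !raddf_sum [RHS]big_ord_recl; congr (_ + _).
  by rewrite /= muln0 addn0.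
by apply: eq_bigr => k _; rewrite lift0 xprodS mulnS addnA.
Qed.

Lemma vop_vtrunc n j g T : (vbound T <= n.+1)%N -> V j g T = vtrunc n j g T.
Proof.
move=> Tn; rewrite /vop vtruncE fct_sumE.
rewrite (big_ord_widen n.+1 (fun k => (Xp j k \o D (j + 3 * k)) g T) Tn) big_mkcond.
apply: eq_bigr => k _; case: ifPn => //; rewrite -leqNgt => Tk.
by rewrite xprod_eq0.
Qed.

Lemma vop_vtrunc_reads n {F j g T} : reads_subset F -> (vbound T <= n.+1)%N ->
  F (V j g) T = F (vtrunc n j g) T.
Proof.
move=> rF Tn; apply: reads_subset_eq => // T' sT'.
by apply: vop_vtrunc; apply: leq_trans Tn; apply: vbound_fsubset.
Qed.

Lemma vtrunc_is_zmod_morphism n j : zmod_morphism (vtrunc n j).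
Proof. by elim: n j => [|n IH] j g h /=; rewrite ?raddfB // IH !raddfB addrACA opprD. Qed.

Lemma vop_is_zmod_morphism j : zmod_morphism (V j).
Proof.
move=> g h; apply/funext => T; rewrite !addrfctE !opprfctE /=.
by rewrite !(@vop_vtrunc (vbound T)) // vtrunc_is_zmod_morphism.
Qed.
HB.instance Definition _ j :=
  GRing.isZmodMorphism.Build (coeffs K) (coeffs K) (V j) (vop_is_zmod_morphism j).

Lemma vop_rec j g : V j g = D j g + X j (X j.+1 (V (j + 3) g)).
Proof.
apply/funext => T; rewrite (@vop_vtrunc (vbound T).+1) 1?leqW // vtruncS addrfctE.
congr (_ + _); symmetry; apply: (@vop_vtrunc_reads _ (X j \o X j.+1)) => //.
by apply: reads_subset_comp; apply: reads_subset_xop.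
Qed.

Lemma vtrunc_xop_anticomm n j m g :
  (m < j)%N -> vtrunc n j (X m g) = - X m (vtrunc n j g).
Proof.
elim: n j => [|n IH] j mj; have jm : j != m by rewrite gtn_eqF.
  exact: dop_xop_anticomm.
have j1m : j.+1 != m by rewrite gtn_eqF // ltnW.
rewrite !vtruncS IH ?ltn_addr // !raddfN /= (xop_anticomm _ j1m) raddfN /=.
by rewrite (xop_anticomm _ jm) opprK raddfD opprD dop_xop_anticomm.
Qed.

Lemma vtrunc_dop_anticomm n j m g :
  (m < j)%N -> vtrunc n j (D m g) = - D m (vtrunc n j g).
Proof.
elim: n j => [|n IH] j mj; have mj' : m != j by rewrite ltn_eqF.
  by apply: dop_anticomm; rewrite eq_sym.
have mj1 : m != j.+1 by rewrite ltn_eqF // ltnW.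
rewrite !vtruncS IH ?ltn_addr // !raddfN /= (xop_dop_anticomm _ mj1) raddfN /=.
by rewrite (xop_dop_anticomm _ mj') opprK raddfD opprD dop_anticomm // eq_sym.
Qed.

Lemma vop_xop_anticomm j m g : (m < j)%N -> V j (X m g) = - X m (V j g).
Proof.
move=> mj; apply/funext => T; rewrite opprfctE (@vop_vtrunc (vbound T)) //.
rewrite vtrunc_xop_anticomm // opprfctE.
by rewrite (vop_vtrunc_reads (vbound T) (reads_subset_xop m)).
Qed.

Lemma vop_dop_anticomm j m g : (m < j)%N -> V j (D m g) = - D m (V j g).
Proof.
move=> mj; apply/funext => T; set n := vbound (m |` T).
have Tn : (vbound T <= n.+1)%N by apply/leqW/vbound_fsubset/fsubsetU1.
rewrite opprfctE (@vop_vtrunc n) // vtrunc_dop_anticomm // opprfctE /dop.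
by case: ifP => // _; rewrite (@vop_vtrunc n).
Qed.

Lemma vop_xop_diag j h : V j (X j h) = h - X j (V j h).
Proof.
have jj1 : j.+1 != j by rewrite gtn_eqF.
rewrite vop_rec vop_xop_anticomm; last by lia.
rewrite raddfN /= (xop_anticomm _ jj1) opprK xop2 addr0 dop_xop_diag.
by rewrite [V j h]vop_rec raddfD /= xop2 addr0.
Qed.

Definition anticomm (A B : op K) : op K := fun g => A (B g) + B (A g).

Lemma anticommC A B g : anticomm A B g = anticomm B A g.
Proof. exact: addrC. Qed.

Lemma anticomm_vop_shift i j g : (i.+1 < j)%N ->
  anticomm (V i) (V j) g = X i (X i.+1 (anticomm (V (i + 3)) (V j) g)).
Proof.
move=> i1j; have ij := ltnW i1j.
rewrite /anticomm [V i (V j g)]vop_rec [V i g]vop_rec raddfD /=.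
rewrite vop_dop_anticomm ?vop_xop_anticomm // raddfN /= opprK raddfD /=.
by rewrite addrACA addrN add0r raddfD.
Qed.

Lemma vop_sq i g : V i (V i g) = X i.+1 (V (i + 3) g).
Proof.
have ii1 : i != i.+1 by rewrite ltn_eqF.
have i1i : i.+1 != i by rewrite gtn_eqF.
have [ii3 i1i3] : (i < i + 3)%N /\ (i.+1 < i + 3)%N by lia.
have e1 : D i (V i g) = X i.+1 (V (i + 3) g) + X i (X i.+1 (D i (V (i + 3) g))).
  rewrite [V i g]vop_rec raddfD /= dop2 add0r dop_xop_diag.
  by rewrite (dop_xop_anticomm _ ii1) raddfN /= opprK.
have e2 : X i (X i.+1 (V (i + 3) (V i g))) = - X i (X i.+1 (D i (V (i + 3) g))).
  rewrite [V i g]vop_rec raddfD /= vop_dop_anticomm // !vop_xop_anticomm //.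
  rewrite raddfN /= opprK !raddfD /= raddfN /= (xop_anticomm _ i1i) xop2.
  by rewrite !(raddf0, oppr0) addr0 raddfN.
by rewrite [LHS]vop_rec e1 e2 addrK.
Qed.

Lemma anticomm_vopS i g : anticomm (V i) (V i.+1) g = - X i (V (i + 3) g).
Proof.
have cancel : X i (X i.+1 (anticomm (V (i + 3)) (V i.+1) g)) = 0.
  by rewrite anticommC anticomm_vop_shift ?xop2 ?raddf0 //; lia.
rewrite /anticomm [V i (V i.+1 g)]vop_rec [V i g]vop_rec raddfD /=.
rewrite vop_dop_anticomm // vop_xop_anticomm // vop_xop_diag raddfB /=.
move: cancel; rewrite /anticomm !raddfD /= => cancel.
by rewrite addrACA addrN add0r opprK addrCA cancel addr0.
Qed.

Lemma anticomm_vopSS i g :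
  anticomm (V i) (V i.+2) g = - X i (X i.+1 (X i.+2 (V (i + 5) g))).
Proof.
rewrite anticomm_vop_shift // anticommC addn3 anticomm_vopS.
by rewrite !raddfN (_ : i.+2 + 3 = i + 5)%N; last lia.
Qed.

Lemma anticomm_vop i k g :
  [/\ anticomm (V i) (V (i + 3 * k)) g =
        Xp i k (X (i + 3 * k).+1 (V (i + 3 * k + 3) g)) *+ 2,
      anticomm (V i) (V (i + 3 * k + 1)) g =
        - Xp i k (X (i + 3 * k) (V (i + 3 * k + 3) g)) &
      anticomm (V i) (V (i + 3 * k + 2)) g =
        - Xp i k.+1 (X (i + 3 * k + 2) (V (i + 3 * k + 5) g))].
Proof.
elim: k i => [|k IH] i.
  rewrite muln0 !addn0 addn1 addn2 anticomm_vopS anticomm_vopSS /=.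
  by rewrite muln0 addn0 /anticomm vop_sq.
have -> : (i + 3 * k.+1 = i + 3 + 3 * k)%N by lia.
have [IH0 IH1 IH2] := IH (i + 3)%N.
have [lt0 lt1 lt2] : [/\ (i.+1 < i + 3 + 3 * k)%N, (i.+1 < i + 3 + 3 * k + 1)%N
  & (i.+1 < i + 3 + 3 * k + 2)%N] by split; lia.
rewrite !(anticomm_vop_shift i) //.
by rewrite IH0 IH1 IH2 !raddfMn !raddfN !xprodS.
Qed.
End Operators.
Arguments anticomm {K}.

Lemma scomm_odd_odd (K : fieldType) (A B : op K) g :
  scomm K true true A B g = anticomm A B g.
Proof. by apply/funext => T; rewrite /scomm mulN1r opprK. Qed.

Theorem lemma4p2 (K : fieldType) (i k : nat) (f : coeffs K) :
  grassmann f ->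
  [/\ scomm K true true (vop K i) (vop K (i + 3 * k)) f =
        (fun T => 2 * (xprod K i k \o xop K (i + 3 * k).+1 \o vop K (i + 3 * k + 3)) f T),
      scomm K true true (vop K i) (vop K (i + 3 * k + 1)) f =
        (fun T => - (xprod K i k \o xop K (i + 3 * k) \o vop K (i + 3 * k + 3)) f T) &
      scomm K true true (vop K i) (vop K (i + 3 * k + 2)) f =
        (fun T => - (xprod K i k.+1 \o xop K (i + 3 * k + 2) \o vop K (i + 3 * k + 5)) f T)].
Proof.
(* The identities hold for every coefficient function, finitely supported or not. *)
move=> _; have [e0 e1 e2] := anticomm_vop K i k f.
split; rewrite scomm_odd_odd ?e0 ?e1 ?e2 //.
by rewrite natmulfctE; apply/funext => T; rewrite mulr_natl.
Qed.
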